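(* Fix $n\in\mathbb{N}$ and $s\in(0,1)$. Suppose that for every $i>2$ the jump kernels $j_i^{(n)}$ satisfy $\lambda_i|x-y|^{-1-2s}\le j_i^{(n)}(x,y)\le\Lambda_i|x-y|^{-1-2s}$ for all $n\ge0$ and all wires $\{x,y\}$, with constants $0<\lambda_i\le\Lambda_i<\infty$ satisfying $\lim_{i\to\infty}\lambda_i/i^2=1$ and $\lim_{i\to\infty}\Lambda_i/i^2=1$. Then $$\lim_{i\to\infty}\sum_{x\in V_{i-}^{(n)}}\sum_{y\in V_{i+}^{(n)}}j_i^{(n)}(x,y)\mu_i^{(n)}(x)\mu_i^{(n)}(y)=1.$$
   Context: Index graph: vertices $\mathbb{N}$; vertex $i$ has edges $e_{i,2i-2}$ to $2i-2$ (only if $i\ge2$), $e_{i,2i-1},e'_{i,2i-1}$ to $2i-1$, $e_{i,2i}$ to $2i$, weights $r_e>0$ with $r_{e_{i,2i-1}}=r_{e'_{i,2i-1}}$. For $e$ from $i$ to $j$, $\phi_e(x)=\frac{j}{2i}x+s_e$, $s_e=0$ for $e\in\{e_{i,2i-1},e_{i,2i}\}$, $s_e=\frac1{2i}$ for $e\in\{e_{i,2i-2},e'_{i,2i-1}\}$. $E_i^{(n)}$: paths $\sigma=e_1\cdots e_n$ of length $n$ from $i$; $\phi_\sigma=\phi_{e_1}\circ\cdots\circ\phi_{e_n}$, $\delta_\sigma=r_{e_1}\cdots r_{e_n}$. For $i>1$: $V_{i-}^{(n)}=\{k/(i2^n)\}_{k=0}^{2^n-1}$, $V_{i+}^{(n)}=\{1-k/(i2^n)\}_{k=0}^{2^n-1}$;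 the wires $\{\phi_\sigma(0),\phi_\sigma(1)\}$, $\sigma\in E_i^{(n)}$, are all pairs $\{x,y\}$ with $x\in V_{i-}^{(n)},y\in V_{i+}^{(n)}$, each with a unique path $\sigma^{(n)}_{x,y}$. $\mu_i^{(n)}(x)=\frac1{i2^n}$ for $x\in V_{i-}^{(n)}\cup V_{i+}^{(n)}$. Kernel $j_i^{(n)}(x,y)=(\delta_{\sigma^{(n)}_{x,y}}\mu_i^{(n)}(x)\mu_i^{(n)}(y))^{-1}$ on wires, $0$ otherwise. *)

From HB Require Import structures.
From mathcomp Require Import all_boot all_order all_algebra.
From mathcomp Require Import all_classical all_reals all_analysis.
Set Implicit Arguments. Unset Strict Implicit. Unset Printing Implicit Defensive.
Import Order.TTheory GRing.Theory Num.Theory.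
Local Open Scope ring_scope.

(* Edge labels out of a vertex i of the index graph ('I_4):
     0 : e_{i,2i-2}  (to 2i-2, only if i >= 2), shift 1/(2i)
     1 : e_{i,2i-1}  (to 2i-1),                 shift 0
     2 : e'_{i,2i-1} (to 2i-1),                 shift 1/(2i)
     3 : e_{i,2i}    (to 2i),                   shift 0          *)
Definition lbl := 'I_4.

Definition next (i : nat) (e : lbl) : nat :=
  match nat_of_ord e with
  | 0 => (2 * i - 2)%N
  | 1 => (2 * i - 1)%N
  | 2 => (2 * i - 1)%N
  | _ => (2 * i)%N
  end.

Definition valid_edge (i : nat) (e : lbl) : bool :=
  (1 <= i)%N && ((nat_of_ord e != 0%N) || (2 <= i)%N).

Definition shift {R : realType} (i : nat) (e : lbl) : R :=
  if (nat_of_ord e == 0%N) || (nat_of_ord e == 2%N) then (2 * i%:R)^-1 else 0.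

Definition phi_e {R : realType} (i : nat) (e : lbl) (x : R) : R :=
  (next i e)%:R / (2 * i%:R) * x + shift i e.

Fixpoint path_ok (i : nat) (s : seq lbl) : bool :=
  match s with
  | [::] => true
  | e :: s' => valid_edge i e && path_ok (next i e) s'
  end.

Fixpoint phi {R : realType} (i : nat) (s : seq lbl) (x : R) : R :=
  match s with
  | [::] => x
  | e :: s' => phi_e i e (phi (next i e) s' x)
  end.

Fixpoint delta {R : realType} (r : nat -> lbl -> R) (i : nat) (s : seq lbl) : R :=
  match s with
  | [::] => 1
  | e :: s' => r i e * delta r (next i e) s'
  end.

Definition Vminus {R : realType} (i n : nat) : seq R :=
  [seq k%:R / (i%:R * 2%:R ^+ n) | k <- iota 0 (2 ^ n)].
Definition Vplus {R : realType} (i n : nat) : seq R :=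
  [seq 1 - k%:R / (i%:R * 2%:R ^+ n) | k <- iota 0 (2 ^ n)].

Definition mu {R : realType} (i n : nat) (x : R) : R :=
  if (x \in Vminus (R:=R) i n) || (x \in Vplus (R:=R) i n)
  then (i%:R * 2%:R ^+ n)^-1 else 0.

Definition wire_of {R : realType} (i : nat) (s : seq lbl) (x y : R) : bool :=
  ((phi i s 0 == x) && (phi i s 1 == y)) || ((phi i s 0 == y) && (phi i s 1 == x)).

Definition is_wire {R : realType} (i n : nat) (x y : R) : Prop :=
  exists s : n.-tuple lbl, path_ok i s && wire_of i s x y.

(* jump kernel j_i^{(n)}(x,y): (delta_{sigma_{x,y}} mu(x) mu(y))^{-1} on wires,
   where sigma_{x,y} is the (unique) path of length n from i with wire {x,y};
   0 otherwise *)
Definition jker {R : realType} (r : nat -> lbl -> R) (i n : nat) (x y : R) : R :=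
  match [pick s : n.-tuple lbl | path_ok i s && wire_of i s x y] with
  | Some s => (delta r i s * mu i n x * mu i n y)^-1
  | None => 0
  end.

(* The points of V_{i-}^(n) and V_{i+}^(n) are x = k/(i 2^n) and y = 1 - l/(i 2^n)
   with k, l < 2^n, and every such pair is a wire: a path realising it is read
   off the binary digits of k and l, one edge per digit.  Hence the kernel bounds
   apply to all 4^n terms.  Since 1 - 2/i <= |x - y| <= 1, the factor
   |x - y|^(-1-2s) lies in [1, (1 - 2/i)^-3], and mu(x) mu(y) = (i 2^n)^-2, so the
   sum is squeezed between lam_i / i^2 and Lam_i (1 - 2/i)^-3 / i^2, both of which
   tend to 1. *)

From Pilot Require Import Defs.
From HB Require Import structures.
From mathcomp Require Import all_boot all_order all_algebra.
From mathcomp Require Import all_classical all_reals all_analysis.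
From mathcomp Require Import zify ring lra.
Set Implicit Arguments.
Unset Strict Implicit.
Unset Printing Implicit Defensive.
Import Order.TTheory GRing.Theory Num.Theory.
Import numFieldNormedType.Exports.
Local Open Scope classical_set_scope.
Local Open Scope ring_scope.

Section Grid.
Variable R : realType.

Definition grid (i n k : nat) : R := k%:R / (i%:R * 2 ^+ n).

Lemma Vminus_grid i n : Vminus i n = [seq grid i n k | k <- index_iota 0 (2 ^ n)].
Proof. by rewrite /index_iota subn0. Qed.

Lemma Vplus_grid i n : Vplus i n = [seq 1 - grid i n k | k <- index_iota 0 (2 ^ n)].
Proof. by rewrite /index_iota subn0. Qed.

(* The label of the first edge of a path fixes the leading binary digit of both
   wire ends: [bit0 e] that of k in x = k/(i 2^n), [bit1 e] that of l in
   y = 1 - l/(i 2^n). *)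
Definition bit0 (e : lbl) : bool := (nat_of_ord e == 0%N) || (nat_of_ord e == 2%N).
Definition bit1 (e : lbl) : bool := (nat_of_ord e == 0%N) || (nat_of_ord e == 1%N).

Definition lbl_of_bits (b0 b1 : bool) : lbl :=
  inord (if b0 then (if b1 then 0 else 2) else (if b1 then 1 else 3)).

Lemma bit0_lbl_of_bits b0 b1 : bit0 (lbl_of_bits b0 b1) = b0.
Proof. by case: b0; case: b1; rewrite /bit0 /lbl_of_bits inordK. Qed.

Lemma bit1_lbl_of_bits b0 b1 : bit1 (lbl_of_bits b0 b1) = b1.
Proof. by case: b0; case: b1; rewrite /bit1 /lbl_of_bits inordK. Qed.

Lemma valid_edge_lbl_of_bits i b0 b1 : (2 <= i)%N -> valid_edge i (lbl_of_bits b0 b1).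
Proof. by move=> hi; case: b0; case: b1; rewrite /valid_edge /lbl_of_bits inordK //; lia. Qed.

Lemma next_ge2 i e : (2 <= i)%N -> (2 <= Defs.next i e)%N.
Proof. by rewrite /Defs.next; case: e => [[|[|[|[|?]]]] //= _]; lia. Qed.

Lemma next_gt0 i e : valid_edge i e -> (0 < Defs.next i e)%N.
Proof. by rewrite /valid_edge /Defs.next; case: e => [[|[|[|[|?]]]] //= _]; lia. Qed.

Lemma next_add_shift i e : valid_edge i e ->
  (Defs.next i e)%:R / (2 * i%:R) + Defs.shift i e = 1 - (bit1 e)%:R / (2 * i%:R) :> R.
Proof.
move=> he; have hi : (0 : R) < i%:R by rewrite ltr0n; move: he; rewrite /valid_edge; lia.
move: he; rewrite /valid_edge /Defs.shift /bit1 /Defs.next.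
case: e => [[|[|[|[|?]]]] //= _] he; rewrite ?natrM //;
  rewrite ?natrB ?natrM; try lia; field; by rewrite gt_eqF.
Qed.

Lemma phi_e_grid i n e k : valid_edge i e ->
  phi_e i e (grid (Defs.next i e) n k) = grid i n.+1 (k + bit0 e * 2 ^ n).
Proof.
move=> he.
have hi : (0 : R) < i%:R by rewrite ltr0n; move: he; rewrite /valid_edge; lia.
have hj : (0 : R) < (Defs.next i e)%:R by rewrite ltr0n next_gt0.
rewrite /phi_e /Defs.shift /grid -/(bit0 e); case: (bit0 e);
  rewrite ?mul1n ?mul0n ?addn0 ?natrD ?natrX exprS; field;
  by rewrite ?mulf_neq0 ?gt_eqF ?exprn_gt0.
Qed.

Lemma phi_e_cogrid i n e l : valid_edge i e ->
  phi_e i e (1 - grid (Defs.next i e) n l) = 1 - grid i n.+1 (l + bit1 e * 2 ^ n).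
Proof.
move=> he.
have hi : (0 : R) < i%:R by rewrite ltr0n; move: he; rewrite /valid_edge; lia.
have hj : (0 : R) < (Defs.next i e)%:R by rewrite ltr0n next_gt0.
rewrite /phi_e /grid.
have -> : (Defs.next i e)%:R / (2 * i%:R) * (1 - l%:R / ((Defs.next i e)%:R * 2 ^+ n))
    + Defs.shift i e
  = ((Defs.next i e)%:R / (2 * i%:R) + Defs.shift i e) - l%:R / (i%:R * 2 ^+ n.+1) :> R.
  by rewrite exprS; field; rewrite ?mulf_neq0 ?gt_eqF ?exprn_gt0.
rewrite next_add_shift //; case: (bit1 e) => /=;
  rewrite ?mul1n ?mul0n ?addn0 ?natrD ?natrX exprS; field;
  by rewrite ?mulf_neq0 ?gt_eqF ?exprn_gt0.
Qed.

Lemma split_top_bit n k : (k < 2 ^ n.+1)%N ->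
  exists b : bool, exists2 k', (k' < 2 ^ n)%N & k = (k' + b * 2 ^ n)%N.
Proof.
rewrite expnS => hk; case: (leqP (2 ^ n) k) => hk2;
  [exists true, (k - 2 ^ n)%N | exists false, k]; rewrite ?mul1n ?mul0n; lia.
Qed.

Lemma grid_path n i k l : (2 <= i)%N -> (k < 2 ^ n)%N -> (l < 2 ^ n)%N ->
  exists s : seq lbl, [/\ size s = n, path_ok i s,
    phi i s 0 = grid i n k & phi i s 1 = 1 - grid i n l].
Proof.
elim: n i k l => [|n IH] i k l hi hk hl.
  have [-> ->] : k = 0%N /\ l = 0%N by rewrite expn0 in hk hl; lia.
  by exists [::]; rewrite /grid /= mul0r subr0.
have [b0 [k' hk' ->]] := split_top_bit hk; have [b1 [l' hl' ->]] := split_top_bit hl.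
set e := lbl_of_bits b0 b1.
have he : valid_edge i e by apply: valid_edge_lbl_of_bits.
have [s [hs hpath h0 h1]] := IH (Defs.next i e) k' l' (next_ge2 e hi) hk' hl'.
exists (e :: s); split; rewrite /= ?hs ?he ?hpath //.
  by rewrite h0 phi_e_grid // bit0_lbl_of_bits.
by rewrite h1 phi_e_cogrid // bit1_lbl_of_bits.
Qed.

Lemma is_wire_grid i n k l : (2 <= i)%N -> (k < 2 ^ n)%N -> (l < 2 ^ n)%N ->
  is_wire i n (grid i n k) (1 - grid i n l).
Proof.
move=> hi hk hl; have [s [hs hpath h0 h1]] := grid_path hi hk hl.
have hsz : size s == n by rewrite hs.
by exists (Tuple hsz); rewrite /= hpath /wire_of h0 h1 !eqxx.
Qed.

Lemma mu_grid i n k : (k < 2 ^ n)%N -> mu i n (grid i n k) = (i%:R * 2 ^+ n)^-1.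
Proof.
move=> hk; have hx : grid i n k \in Vminus i n by rewrite Vminus_grid map_f ?mem_index_iota.
by rewrite /mu hx.
Qed.

Lemma mu_cogrid i n k : (k < 2 ^ n)%N -> mu i n (1 - grid i n k) = (i%:R * 2 ^+ n)^-1.
Proof.
move=> hk; have hx : 1 - grid i n k \in Vplus i n
  by rewrite Vplus_grid (map_f (fun k => 1 - grid i n k)) ?mem_index_iota.
by rewrite /mu hx orbT.
Qed.

Lemma grid_bounds i n k : (0 < i)%N -> (k <= 2 ^ n)%N -> 0 <= grid i n k <= i%:R^-1.
Proof.
move=> hi hk; have hP : (0 : R) < i%:R * 2 ^+ n by rewrite mulr_gt0 ?exprn_gt0 ?ltr0n.
rewrite /grid divr_ge0 ?(ltW hP) //= ler_pdivrMr // mulrA mulVf ?mul1r ?gt_eqF ?ltr0n //.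
by rewrite -natrX ler_nat.
Qed.

Lemma grid_dist_bounds i n k l : (2 <= i)%N -> (k < 2 ^ n)%N -> (l < 2 ^ n)%N ->
  1 - 2 / i%:R <= `|grid i n k - (1 - grid i n l)| <= 1.
Proof.
move=> hi hk hl.
have /andP[hk0 hk1] := grid_bounds (ltnW hi) (ltnW hk).
have /andP[hl0 hl1] := grid_bounds (ltnW hi) (ltnW hl).
have hI : 2 / i%:R <= 1 :> R by rewrite ler_pdivrMr ?mul1r ?ler_nat ?ltr0n //; lia.
have -> : grid i n k - (1 - grid i n l) = - (1 - (grid i n k + grid i n l)) by ring.
rewrite normrN ger0_norm; lra.
Qed.

End Grid.

Lemma powR_le1_bounds (R : realType) (a d p : R) : 0 < a -> a <= d <= 1 -> -3 <= p <= 0 ->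
  1 <= d `^ p <= (a ^+ 3)^-1.
Proof.
move=> ha /andP[had hd1] /andP[hp3 hp0].
have hd0 : 0 < d := lt_le_trans ha had.
have hd : 0 < d <= 1 by rewrite hd0 hd1.
apply/andP; split; first by rewrite -(powRr0 d) ger_powR.
apply: (le_trans (y := d `^ (-3%:R))); first exact: ger_powR.
rewrite powR_invn ?(ltW hd0) // lef_pV2 ?posrE ?exprn_gt0 //.
by rewrite lerXn2r ?nnegrE ?(ltW ha) ?(ltW hd0).
Qed.

Lemma sum_grid_cst (R : realType) i n (a : R) : (0 < i)%N ->
  \sum_(0 <= k < 2 ^ n) \sum_(0 <= l < 2 ^ n) a * (i%:R * 2 ^+ n)^-1 ^+ 2
  = a / i%:R ^+ 2.
Proof.
move=> hi; rewrite !sumr_const_nat subn0 -mulrnA -(mulr_natr _ (2 ^ n * 2 ^ n)) natrM natrX.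
by field; rewrite ?mulf_neq0 ?gt_eqF ?exprn_gt0 ?ltr0n.
Qed.

Lemma cvg_inv_cube_one_sub (R : realType) :
  (fun i : nat => ((1 - 2 / (i%:R : R)) ^+ 3)^-1) @ \oo --> (1 : R).
Proof.
have h1 : (fun i : nat => 1 - 2 * (i%:R : R)^-1) @ \oo --> (1 : R).
  rewrite -[X in _ --> X]subr0 -[X in _ - X](mulr0 2).
  apply: cvgB; first exact: cvg_cst.
  by apply: cvgM; [exact: cvg_cst | rewrite -cvg_shiftS; exact: cvg_harmonic].
have h3 : (fun i : nat => (1 - 2 / (i%:R : R)) ^+ 3) @ \oo --> (1 : R).
  by have := continuous_cvg _ (@exprn_continuous R 3 1) h1; rewrite expr1n; apply.
by have := cvgV (oner_neq0 R) h3; rewrite invr1; apply.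
Qed.

Section KernelMass.
Variables (R : realType) (r : nat -> lbl -> R) (n : nat) (s : R) (lam Lam : nat -> R).
Hypotheses (s_ge0 : 0 <= s) (s_le1 : s <= 1).
Hypothesis lam_ge0 : forall i, (2 < i)%N -> 0 <= lam i.
Hypothesis Lam_ge0 : forall i, (2 < i)%N -> 0 <= Lam i.
Hypothesis jker_bounds : forall (i : nat) (x y : R), (2 < i)%N -> is_wire i n x y ->
  lam i * (`|x - y| `^ (-1 - 2 * s)) <= jker r i n x y
  /\ jker r i n x y <= Lam i * (`|x - y| `^ (-1 - 2 * s)).

Lemma jker_grid_bounds i k l : (2 < i)%N -> (k < 2 ^ n)%N -> (l < 2 ^ n)%N ->
  lam i <= jker r i n (grid R i n k) (1 - grid R i n l)
        <= Lam i * ((1 - 2 / i%:R) ^+ 3)^-1.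
Proof.
move=> hi hk hl.
have [hlo hhi] := jker_bounds hi (is_wire_grid R (ltnW hi) hk hl).
have ha : 0 < 1 - 2 / i%:R :> R.
  by rewrite subr_gt0 ltr_pdivrMr ?mul1r ?ltr_nat ?ltr0n //; lia.
have hp : -3 <= -1 - 2 * s <= 0.
  by apply/andP; split; move: s_ge0 s_le1; lra.
have /andP[hd1 hdg] := powR_le1_bounds ha (grid_dist_bounds R (ltnW hi) hk hl) hp.
apply/andP; split.
  by apply: le_trans _ hlo; rewrite -{1}[lam i]mulr1; exact: ler_wpM2l (lam_ge0 hi) _ _ hd1.
by apply: le_trans hhi _; exact: ler_wpM2l (Lam_ge0 hi) _ _ hdg.
Qed.

Definition kernel_mass (i : nat) : R :=
  \sum_(x <- Vminus i n) \sum_(y <- Vplus i n) jker r i n x y * mu i n x * mu i n y.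

Lemma kernel_mass_bounds i : (2 < i)%N ->
  lam i / i%:R ^+ 2 <= kernel_mass i <= Lam i / i%:R ^+ 2 * ((1 - 2 / i%:R) ^+ 3)^-1.
Proof.
move=> hi; have hi0 : (0 < i)%N by apply: ltn_trans hi.
rewrite /kernel_mass Vminus_grid Vplus_grid big_map.
under eq_bigr do rewrite big_map.
rewrite mulrAC -!(sum_grid_cst n _ hi0).
apply/andP; split; apply: ler_sum_nat => k /andP[_ hk]; apply: ler_sum_nat => l /andP[_ hl];
  rewrite mu_grid // mu_cogrid // -mulrA -expr2 ler_wpM2r ?exprn_ge0 ?invr_ge0 ?mulr_ge0 ?exprn_ge0 //;
  by have /andP[] := jker_grid_bounds hi hk hl.
Qed.

End KernelMass.

Theorem lemma6p2 (R : realType) (r : nat -> lbl -> R)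
  (r_pos : forall (i : nat) (e : lbl), valid_edge i e -> 0 < r i e)
  (r_sym : forall i : nat, r i (inord 1) = r i (inord 2))
  (n : nat) (s : R) (s_pos : 0 < s) (s_lt1 : s < 1)
  (lam Lam : nat -> R)
  (lam_pos : forall i : nat, (2 < i)%N -> 0 < lam i)
  (lam_le : forall i : nat, (2 < i)%N -> lam i <= Lam i)
  (hbound : forall (i m : nat) (x y : R), (2 < i)%N -> is_wire i m x y ->
     lam i * (`|x - y| `^ (-1 - 2 * s)) <= jker r i m x y
     /\ jker r i m x y <= Lam i * (`|x - y| `^ (-1 - 2 * s)))
  (hlam : (fun i : nat => lam i / (i%:R ^+ 2)) @ \oo --> (1 : R))
  (hLam : (fun i : nat => Lam i / (i%:R ^+ 2)) @ \oo --> (1 : R)) :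
  (fun i : nat => \sum_(x <- Vminus i n) \sum_(y <- Vplus i n)
       jker r i n x y * mu i n x * mu i n y) @ \oo --> (1 : R).
Proof.
have lam_ge0 i : (2 < i)%N -> 0 <= lam i by move=> hi; exact/ltW/lam_pos.
have Lam_ge0 i : (2 < i)%N -> 0 <= Lam i by move=> hi; exact: le_trans (lam_ge0 i hi) (lam_le i hi).
have hup : (fun i : nat => Lam i / i%:R ^+ 2 * ((1 - 2 / i%:R) ^+ 3)^-1) @ \oo --> (1 : R).
  by have := cvgM hLam (@cvg_inv_cube_one_sub R); rewrite mulr1; apply.
apply: (squeeze_cvgr _ hlam hup); near=> i.
apply: (kernel_mass_bounds (ltW s_pos) (ltW s_lt1) lam_ge0 Lam_ge0 (fun i => hbound i n)).
by near: i; exists 3%N.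
Unshelve. all: by end_near.
Qed.
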